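(* Suppose $(T;C_1,\dots,C_w)$ forms a $w$-wheel ($w\ge4$) with sectors $S_1,\dots,S_w$ (indices modulo $w$). Then for all $i\neq j$, the set $C(i,j)=C_i\cup T\cup C_j$ is a $\kappa$-cut that disconnects $D(i,j)$ from the rest of the graph. Moreover, if $j-i\not\equiv 1$ and $j-i\not\equiv w-1\pmod w$, then $C(i,j)$ has exactly two sides, namely $D(i,j)$ and $D(j,i)$. Furthermore $|C_i|=\frac{\kappa-|T|}{2}$ for every $i$.
   Context: $G=(V,E)$ is a finite, simple, connected, undirected, non-complete graph; $\kappa$ is its vertex connectivity. A cut is a set $U\subset V$ whose removal disconnects $G$; a $\kappa$-cut is a cut of size $\kappa$; a side of a cut is a connected component of the graph after removing it. A set $S$ disconnects $P$ from the rest of the graph if $P\ne\emptyset$, $P\cap S=\emptyset$, $V\setminus(S\cup P)\ne\emptyset$ and every path from $P$ to $V\setminus(S\cup P)$ meets $S$. Wheels: for $w\ge4$ (indices modulo $w$), if $V$ is partitioned into pairwise disjoint sets $T,C_1,\dots,C_w,S_1,\dots,S_w$ with all $C_i,S_i$ nonempty ($T$ may be empty) such that for every $i$ the set $C_i\cup T\cup C_{i+2}$ is a $\kappa$-cut that disconnects $S_i\cup C_{i+1}\cup S_{i+1}$ from the rest of the graph, then $(T;C_1,\dots,C_w)$ forms a $w$-wheel with sectors $S_1,\dots,S_w$ (center $T$, spokes $C_i$). For $i\ne j$, $C(i,j)=C_i\cup T\cup C_j$ and $D(i,j)=S_i\cup C_{i+1}\cup S_{i+1}\cup\cdots\cup C_{j-1}\cup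 S_{j-1}$ (going cyclically from $i$ to $j-1$; in particular $D(i,i+1)=S_i$). *)

From mathcomp Require Import all_boot.
Set Implicit Arguments. Unset Strict Implicit. Unset Printing Implicit Defensive.

Section Graphs.
Variable V : finType.
Variable e : rel V.

Definition induced (A : {set V}) : rel V :=
  fun x y => [&& x \in A, y \in A & e x y].

Definition path_in (A : {set V}) (x y : V) : bool :=
  [&& x \in A, y \in A & connect (induced A) x y].

Definition is_cut (U : {set V}) : bool :=
  [exists x, exists y, [&& x \notin U, y \notin U & ~~ path_in (~: U) x y]].

(* vertex connectivity: minimum size of a cut (|V| if there is none,
   which does not happen for non-complete graphs) *)
Definition kappa : nat :=
  \big[minn/#|V|]_(U : {set V} | is_cut U) #|U|.

Definition is_kcut (U : {set V}) : Prop := is_cut U /\ #|U| = kappa.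

Definition is_side (U P : {set V}) : Prop :=
  exists2 x, x \notin U & P = [set y | path_in (~: U) x y].

Definition disconnects (S P : {set V}) : Prop :=
  [/\ P != set0, P :&: S = set0, ~: (S :|: P) != set0 &
      forall x y, x \in P -> y \in ~: (S :|: P) -> ~~ path_in (~: S) x y].

(* Wheels.  Spokes and sectors are indexed by nat, read modulo w
   (only the values C i, S i for i < w matter; we always write C (i %% w)). *)
Definition Cij (w : nat) (T : {set V}) (C : nat -> {set V}) (i j : nat) :=
  C (i %% w) :|: T :|: C (j %% w).

(* D(i,j) = S_i u C_{i+1} u S_{i+1} u ... u C_{j-1} u S_{j-1} *)
Definition Dij (w : nat) (C S : nat -> {set V}) (i j : nat) : {set V} :=
  let d := (j + w - i %% w) %% w in
  (\bigcup_(k < d) S ((i + k) %% w)) :|: (\bigcup_(1 <= k < d) C ((i + k) %% w)).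

Definition is_wheel (w : nat) (T : {set V}) (C S : nat -> {set V}) : Prop :=
  4 <= w /\
  T :|: \bigcup_(i < w) (C i :|: S i) = setT /\
  (forall i, i < w -> C i != set0 /\ S i != set0) /\
  (forall i j, i < w -> j < w -> i != j ->
      C i :&: C j = set0 /\ S i :&: S j = set0) /\
  (forall i j, i < w -> j < w -> C i :&: S j = set0) /\
  (forall i, i < w -> T :&: C i = set0 /\ T :&: S i = set0) /\
  (forall i, i < w ->
      is_kcut (Cij w T C i (i + 2)) /\
      disconnects (Cij w T C i (i + 2))
                  (S i :|: C ((i + 1) %% w) :|: S ((i + 1) %% w))).

End Graphs.

Definition simple_graph (V : finType) (e : rel V) : Prop :=
  symmetric e /\ irreflexive e.
Definition connected_graph (V : finType) (e : rel V) : Prop :=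
  forall x y, connect e x y.
Definition non_complete (V : finType) (e : rel V) : Prop :=
  exists x y, x != y /\ ~~ e x y.

From mathcomp Require Import all_boot zify.
Set Implicit Arguments. Unset Strict Implicit. Unset Printing Implicit Defensive.

(* The central notion is a [closed_part] of a set U:
   a nonempty set P, disjoint from U, with vertices outside U u P, and with no
   edge from P to V \ (U u P).  Such a P is disconnected by U (so U is a cut),
   a connected closed part is a side of U, and if |U| = kappa then every vertex
   of U has a neighbour in P (otherwise U minus that vertex would be a smaller
   cut).  From the wheel property at k-1 and at k we read off that a
   sector S_k only sees S_k, C_k, C_{k+1} and T, so S_k is a closed part of the
   adjacent set C_k u T u C_{k+1}.  Comparing the sizes of these adjacent cuts
   (at least kappa) with the wheel cuts C_k u T u C_{k+2} (exactly kappa) shows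
   that all spokes have size (kappa - |T|)/2, hence every C(i,j) has size kappa.
   Next D(i,j) is a closed part of C(i,j), giving the first claim; when both
   arcs between i and j contain a spoke, the minimality of the adjacent cuts
   shows that D(i,j) is connected, and every vertex outside C(i,j) lies in
   D(i,j) or D(j,i), which identifies the two sides of C(i,j). *)

(* A bounded minimum lies below each of its terms; needed because [minn]
   with an arbitrary default is not a monoid law, so [bigD1] does not apply. *)
Lemma bigmin_leq (I : finType) (P : pred I) (F : I -> nat) m j :
  P j -> \big[minn/m]_(i | P i) F i <= F j.
Proof.
move=> Pj; have := mem_index_enum j; elim: (index_enum I) => //= a r IH.
rewrite inE big_cons => /orP[/eqP<-|/IH le_r]; first by rewrite Pj geq_minl.
by case: (P a); rewrite // geq_min le_r orbT.
Qed.

Section SeparatingSets.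
Variables (V : finType) (e : rel V).
Hypothesis e_sym : symmetric e.

Lemma path_in_sym (A : {set V}) x y : path_in e A x y = path_in e A y x.
Proof.
have induced_sym : symmetric (induced e A).
  by move=> u v; rewrite /induced andbCA e_sym.
by rewrite /path_in andbCA (sym_connect_sym induced_sym).
Qed.

Lemma path_in_trans (A : {set V}) x y z :
  path_in e A x y -> path_in e A y z -> path_in e A x z.
Proof.
case/and3P=> Ax _ cxy /and3P[_ Az cyz]; rewrite /path_in Ax Az.
exact: connect_trans cxy cyz.
Qed.

Lemma path_in_edge (A : {set V}) x y :
  x \in A -> y \in A -> e x y -> path_in e A x y.
Proof. by move=> Ax Ay exy; rewrite /path_in Ax Ay connect1 // /induced Ax Ay. Qed.

Lemma path_in_refl (A : {set V}) x : x \in A -> path_in e A x x.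
Proof. by move=> Ax; rewrite /path_in Ax connect0. Qed.

Lemma path_in_sub (A B : {set V}) x y :
  A \subset B -> path_in e A x y -> path_in e B x y.
Proof.
move=> /subsetP sAB /and3P[Ax Ay cxy]; rewrite /path_in !sAB //=.
by apply: connect_sub cxy => u v /and3P[Au Av euv]; rewrite connect1 // /induced !sAB.
Qed.

Lemma path_in_closed (A P : {set V}) x y :
  (forall z z', z \in P -> z' \in A -> e z z' -> z' \in P) ->
  x \in P -> path_in e A x y -> y \in P.
Proof.
move=> clP + /and3P[_ _ /connectP[p pth ->]].
elim: p x pth => //= z p IH x /andP[/and3P[_ Az exz] pth] Px.
exact: IH pth (clP _ _ Px Az exz).
Qed.

Lemma kappa_le (U : {set V}) : is_cut e U -> kappa e <= #|U|.
Proof. by move=> cutU; exact: bigmin_leq. Qed.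

Lemma disconnects_nbr (U P : {set V}) x y :
  disconnects e U P -> x \in P -> e x y -> (y \in U) || (y \in P).
Proof.
case=> _ /setP PU0 _ nopath Px exy; apply: contraT; rewrite negb_or => /andP[Uy Py].
have Ux : x \notin U by apply/negP=> Ux; have := PU0 x; rewrite !inE Px Ux.
have yR : y \in ~: (U :|: P) by rewrite !inE negb_or Uy Py.
case/negP: (nopath x y Px yR).
by apply: path_in_edge; rewrite ?inE.
Qed.

(* P is a nonempty union of components of G - U that is not all of G - U. *)
Definition closed_part (U P : {set V}) : Prop :=
  [/\ P != set0, P :&: U = set0, ~: (U :|: P) != set0 &
      forall z z', z \in P -> e z z' -> z' \notin U -> z' \in P].

Section ClosedPart.
Variables U P : {set V}.
Hypothesis PU : closed_part U P.

Lemma closed_part_notin x : x \in P -> x \notin U.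
Proof.
have [_ /setP PU0 _ _ Px] := PU; apply/negP=> Ux.
by have := PU0 x; rewrite inE Px Ux inE.
Qed.

Lemma closed_part_path x y : x \in P -> path_in e (~: U) x y -> y \in P.
Proof.
have [_ _ _ clP] := PU; apply: path_in_closed => z z' Pz; rewrite inE.
by move=> Uz' ezz'; apply: clP ezz' Uz'.
Qed.

Lemma closed_part_disconnects : disconnects e U P.
Proof.
have [P0 PU0 R0 _] := PU; split=> // x y Px; rewrite !inE negb_or => /andP[_ Py].
by apply/negP=> /(closed_part_path Px); apply/negP.
Qed.

Lemma closed_part_cut : is_cut e U.
Proof.
have [/set0Pn[x Px] _ /set0Pn[y Ry] _] := PU; have [_ _ _ nopath] := closed_part_disconnects.
apply/existsP; exists x; apply/existsP; exists y.
move: (Ry); rewrite !inE negb_or => /andP[-> _]; rewrite closed_part_notin //=.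
exact: nopath.
Qed.

Lemma closed_part_component x :
  (forall y z, y \in P -> z \in P -> path_in e (~: U) y z) ->
  x \in P -> [set y | path_in e (~: U) x y] = P.
Proof.
move=> conn Px; apply/setP=> y; rewrite inE; apply/idP/idP; last exact: conn.
exact: closed_part_path.
Qed.

Lemma closed_part_side :
  (forall y z, y \in P -> z \in P -> path_in e (~: U) y z) -> is_side e U P.
Proof.
have [/set0Pn[x Px] _ _ _] := PU => conn.
by exists x; [exact: closed_part_notin | rewrite closed_part_component].
Qed.

End ClosedPart.

Lemma component_closed_part (U Q : {set V}) x : closed_part U Q -> x \in Q ->
  closed_part U [set y | path_in e Q x y].
Proof.
move=> QU Qx; have [_ /setP QU0 /set0Pn[z Rz] clQ] := QU.
have sub_Q y : y \in [set y | path_in e Q x y] -> y \in Q by rewrite inE => /and3P[].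
split.
- by apply/set0Pn; exists x; rewrite inE path_in_refl.
- apply/setP=> y; rewrite !inE; apply/negP=> /andP[/and3P[_ Qy _] Uy].
  by have := QU0 y; rewrite !inE Qy Uy.
- move: Rz; rewrite !inE negb_or => /andP[Uz Qz]; apply/set0Pn; exists z.
  by rewrite !inE negb_or Uz; apply: contra Qz => /and3P[].
- move=> y y' Cy eyy' Uy'; have Qy := sub_Q _ Cy; have Qy' := clQ _ _ Qy eyy' Uy'.
  by move: Cy; rewrite !inE => Cy; apply: path_in_trans Cy (path_in_edge Qy Qy' eyy').
Qed.

Lemma mincut_neighbour (U P : {set V}) u : closed_part U P ->
  #|U| = kappa e -> u \in U -> exists2 t, t \in P & e u t.
Proof.
move=> PU minU Uu; apply/exists_inP; apply: contraT; rewrite negb_exists_in => /forall_inP noNb.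
have [P0 PU0 R0 clP] := PU.
suff: closed_part (U :\ u) P.
  move=> /closed_part_cut/kappa_le; rewrite -minU (cardsD1 u U) Uu; lia.
split=> //.
- apply/setP=> z; rewrite !inE; case Pz: (z \in P) => //=.
  by rewrite (negbTE (closed_part_notin PU Pz)) andbF.
- case/set0Pn: R0 => y; rewrite !inE negb_or => /andP[Uy Py].
  by apply/set0Pn; exists y; rewrite !inE negb_or negb_and Uy Py orbT.
- move=> z z' Pz ezz'; rewrite !inE negb_and negbK.
  case/orP=> [/eqP z'u|]; last exact: clP Pz ezz'.
  by have := noNb _ Pz; rewrite -z'u e_sym ezz'.
Qed.
End SeparatingSets.

Section Offsets.
Variable w : nat.
Hypothesis w_gt0 : 0 < w.

Definition offset (i m : nat) : nat := (m + w - i) %% w.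

Lemma offset_lt i m : offset i m < w.
Proof. by rewrite ltn_pmod. Qed.

Lemma offsetE i m : i < w -> m < w ->
  offset i m = if i <= m then m - i else m + w - i.
Proof.
move=> lt_iw lt_mw; rewrite /offset; case: leqP => le_im.
  by rewrite (_ : m + w - i = (m - i) + w) ?modnDr ?modn_small //; lia.
by rewrite modn_small //; lia.
Qed.

Lemma offsetK i m : i < w -> m < w -> (i + offset i m) %% w = m.
Proof.
move=> lt_iw lt_mw; rewrite offsetE //; case: leqP => le_im.
  by rewrite (_ : i + (m - i) = m) ?modn_small //; lia.
by rewrite (_ : i + (m + w - i) = m + w) ?modnDr ?modn_small //; lia.
Qed.

Lemma offset_gt0 i m : i < w -> m < w -> i != m -> 0 < offset i m.
Proof. by move=> lt_iw lt_mw /eqP ne_im; rewrite offsetE //; case: (leqP i m); lia. Qed.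

Lemma offset_sym i j : i < w -> j < w -> i != j -> offset j i = w - offset i j.
Proof.
move=> lt_iw lt_jw /eqP ne_ij; rewrite !offsetE //.
by case: (leqP i j); case: (leqP j i); lia.
Qed.

Lemma offset_shift i j k : i < w -> j < w -> offset i j <= k ->
  (j + (k - offset i j)) %% w = (i + k) %% w.
Proof.
move=> lt_iw lt_jw le_dk.
have -> : i + k = i + offset i j + (k - offset i j) by lia.
by rewrite -[in RHS]modnDml offsetK.
Qed.

Lemma addn_modI b a a' : (b + a) %% w = (b + a') %% w -> a < w -> a' < w -> a = a'.
Proof.
by move/eqP; rewrite eqn_modDl => /eqP + lt_aw lt_a'w; rewrite !modn_small.
Qed.

Lemma addn_modI0 b a : b %% w = (b + a) %% w -> a < w -> a = 0.
Proof. by rewrite -{1}[b]addn0 => /addn_modI eq0a lt_aw; rewrite eq0a. Qed.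

Lemma addn_mod_neq b a : 0 < a < w -> (b + a) %% w != b %% w.
Proof. by case/andP=> a_gt0 lt_aw; apply/eqP=> /esym/addn_modI0/(_ lt_aw) a0; rewrite a0 in a_gt0. Qed.

Lemma offset_gt1 i j : i < w -> j < w -> i != j ->
  offset i j != 1 -> offset i j != w - 1 -> 1 < offset i j /\ 1 < offset j i.
Proof.
move=> lt_iw lt_jw ne_ij /eqP ne1 /eqP ne_w1; rewrite (offset_sym lt_iw lt_jw ne_ij).
by have := offset_gt0 lt_iw lt_jw ne_ij; have := offset_lt i j; lia.
Qed.

End Offsets.

Lemma mem_bigcup_seq (V : finType) (I : eqType) (r : seq I) (F : I -> {set V}) x :
  reflect (exists2 k, k \in r & x \in F k) (x \in \bigcup_(k <- r) F k).
Proof.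
elim: r => [|a r IH]; first by rewrite big_nil inE; constructor; case.
rewrite big_cons inE; apply: (iffP orP) => [[xa|/IH[k rk xk]]|[k]].
- by exists a; rewrite ?inE ?eqxx.
- by exists k; rewrite // inE rk orbT.
by rewrite inE => /orP[/eqP->|rk xk]; [left|right; apply/IH; exists k].
Qed.

Lemma Cij_sym (V : finType) w (T : {set V}) C i j : Cij w T C j i = Cij w T C i j.
Proof. by rewrite /Cij -setUA setUC [T :|: _]setUC. Qed.

Section Wheel.
Variables (V : finType) (e : rel V) (w : nat) (T : {set V}) (C S : nat -> {set V}).
Hypothesis e_sym : symmetric e.
Hypothesis W : is_wheel e w T C S.

Lemma wheel_w4 : 4 <= w. Proof. by have [] := W. Qed.

Let w_gt0 : 0 < w. Proof. by have := wheel_w4; lia. Qed.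

Lemma mod_ltw k : k %% w < w.
Proof. exact: ltn_pmod. Qed.

Lemma spoke_nonempty k : C (k %% w) != set0.
Proof. by have [_ [_ [nonempty _]]] := W; case: (nonempty _ (mod_ltw k)). Qed.

Lemma sector_nonempty k : S (k %% w) != set0.
Proof. by have [_ [_ [nonempty _]]] := W; case: (nonempty _ (mod_ltw k)). Qed.

Lemma spoke_mod a b x : x \in C (a %% w) -> x \in C (b %% w) -> a %% w = b %% w.
Proof.
move=> xa xb; apply/eqP; apply: contraT => ne_ab.
have [_ [_ [_ [disj _]]]] := W; have [/setP/(_ x) + _] := disj _ _ (mod_ltw a) (mod_ltw b) ne_ab.
by rewrite !inE xa xb.
Qed.

Lemma sector_mod a b x : x \in S (a %% w) -> x \in S (b %% w) -> a %% w = b %% w.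
Proof.
move=> xa xb; apply/eqP; apply: contraT => ne_ab.
have [_ [_ [_ [disj _]]]] := W; have [_ /setP/(_ x)] := disj _ _ (mod_ltw a) (mod_ltw b) ne_ab.
by rewrite !inE xa xb.
Qed.

Lemma spoke_sector_disj a b x : x \in C (a %% w) -> x \in S (b %% w) -> False.
Proof.
move=> xa xb; have [_ [_ [_ [_ [disj _]]]]] := W.
by move/setP/(_ x): (disj _ _ (mod_ltw a) (mod_ltw b)); rewrite !inE xa xb.
Qed.

Lemma centre_spoke_disj a x : x \in T -> x \in C (a %% w) -> False.
Proof.
move=> xT xa; have [_ [_ [_ [_ [_ [disj _]]]]]] := W.
by have [/setP/(_ x) + _] := disj _ (mod_ltw a); rewrite !inE xT xa.
Qed.

Lemma centre_sector_disj a x : x \in T -> x \in S (a %% w) -> False.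
Proof.
move=> xT xa; have [_ [_ [_ [_ [_ [disj _]]]]]] := W.
by have [_ /setP/(_ x)] := disj _ (mod_ltw a); rewrite !inE xT xa.
Qed.

Lemma vertex_block x :
  x \in T \/ exists2 m, m < w & (x \in C m) || (x \in S m).
Proof.
have [_ [cover _]] := W; have : x \in [set: V] by [].
rewrite -cover inE => /orP[xT|/bigcupP[m _ xm]]; first by left.
by right; exists m; rewrite // -in_setU.
Qed.

(* Two memberships of one vertex in blocks at offsets a, a' < w from a common
   base force a = a'; [block_contra] closes goals where this is impossible. *)
Ltac offsets_contra E := exfalso; have := wheel_w4;
  first [ move: (addn_modI E); lia | move: (addn_modI0 w_gt0 E); lia
        | move: (addn_modI0 w_gt0 (esym E)); lia ].

Ltac block_contra := match goal with H1 : is_true (?x \in _), H2 : is_true (?x \in _) |- _ =>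
  first [ exfalso; exact (centre_spoke_disj H1 H2)
        | exfalso; exact (centre_sector_disj H1 H2)
        | exfalso; exact (spoke_sector_disj H1 H2)
        | let E := fresh "E" in have E := spoke_mod H1 H2; offsets_contra E
        | let E := fresh "E" in have E := sector_mod H1 H2; offsets_contra E ] end.

Lemma wheel_at b :
  is_kcut e (C (b %% w) :|: T :|: C ((b + 2) %% w)) /\
  disconnects e (C (b %% w) :|: T :|: C ((b + 2) %% w))
     (S (b %% w) :|: C ((b + 1) %% w) :|: S ((b + 1) %% w)).
Proof.
have [_ [_ [_ [_ [_ [_ wheel]]]]]] := W; have := wheel _ (mod_ltw b).
by rewrite /Cij !modnDml !modn_mod.
Qed.

Lemma wheel_nbr b x y :
  [|| x \in S (b %% w), x \in C ((b + 1) %% w) | x \in S ((b + 1) %% w)] -> e x y ->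
  [|| y \in C (b %% w), y \in T, y \in C ((b + 2) %% w), y \in S (b %% w),
      y \in C ((b + 1) %% w) | y \in S ((b + 1) %% w)].
Proof.
move=> xR exy; have [_ disc] := wheel_at b.
have xP : x \in S (b %% w) :|: C ((b + 1) %% w) :|: S ((b + 1) %% w).
  by rewrite !inE -orbA.
by have := disconnects_nbr disc xP exy; rewrite !inE -!orbA.
Qed.

(* A sector S_k only sees itself, its two bounding spokes and the centre:
   intersect the regions of the wheel property at bases k - 1 and k. *)
Lemma sector_nbr k x y : x \in S (k %% w) -> e x y ->
  [|| y \in S (k %% w), y \in C (k %% w), y \in C ((k + 1) %% w) | y \in T].
Proof.
move=> xS exy; have w4 := wheel_w4.
have prev1 : (k + (w - 1) + 1) %% w = k %% w by rewrite -addnA subnK ?modnDr //; lia.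
have prev2 : (k + (w - 1) + 2) %% w = (k + 1) %% w.
  by rewrite -addnA (_ : w - 1 + 2 = 1 + w) ?addnA ?modnDr //; lia.
have := wheel_nbr (b := k + (w - 1)) _ exy; rewrite prev1 prev2 xS !orbT => /(_ isT) nbr1.
have := wheel_nbr (b := k) _ exy; rewrite xS => /(_ isT) nbr2.
case/orP: nbr1 => [h1|/orP[h1|/orP[h1|/orP[h1|/orP[h1|h1]]]]];
  case/orP: nbr2 => [h2|/orP[h2|/orP[h2|/orP[h2|/orP[h2|h2]]]]];
  first [by rewrite h1 ?orbT | by rewrite h2 ?orbT | block_contra].
Qed.

Lemma spoke_nbr k x y : x \in C ((k + 1) %% w) -> e x y ->
  [|| y \in C (k %% w), y \in T, y \in C ((k + 2) %% w), y \in S (k %% w),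
      y \in C ((k + 1) %% w) | y \in S ((k + 1) %% w)].
Proof. by move=> xC; apply: wheel_nbr; rewrite xC orbT. Qed.

Lemma card_cut3 a b : a %% w != b %% w ->
  #|C (a %% w) :|: T :|: C (b %% w)| = #|C (a %% w)| + #|T| + #|C (b %% w)|.
Proof.
move=> ne_ab; rewrite !cardsU.
have -> : C (a %% w) :&: T = set0.
  by apply/setP=> x; rewrite !inE; apply/negP=> /andP[xa xT]; block_contra.
have -> : (C (a %% w) :|: T) :&: C (b %% w) = set0.
  apply/setP=> x; rewrite !inE; apply/negP=> /andP[/orP[xa|xT] xb]; last by block_contra.
  by move: ne_ab; rewrite (spoke_mod xa xb) eqxx.
by rewrite !cards0 !subn0.
Qed.

Lemma wheel_cut_card b a :
  #|C ((b + a) %% w)| + #|T| + #|C ((b + (a + 2)) %% w)| = kappa e.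
Proof.
have [[_ <-] _] := wheel_at (b + a); rewrite addnA card_cut3 // eq_sym.
by apply: addn_mod_neq; have := wheel_w4; lia.
Qed.

Lemma sector_closed_part b : closed_part e (C (b %% w) :|: T :|: C ((b + 1) %% w)) (S (b %% w)).
Proof.
have w4 := wheel_w4; split; first exact: sector_nonempty b.
- apply/setP=> x; rewrite !inE; apply/negP=> /andP[xS /orP[/orP[x'|x']|x']]; block_contra.
- case/set0Pn: (sector_nonempty (b + 2)) => z zS; apply/set0Pn; exists z; rewrite !inE.
  by apply/negP=> /orP[/orP[/orP[z'|z']|z']|z']; block_contra.
- move=> z z' zS ezz'; rewrite !inE => /norP[/norP[nCb nT] nCb1].
  by case/or4P: (sector_nbr zS ezz') => //; rewrite ?(negbTE nCb) ?(negbTE nT) ?(negbTE nCb1).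
Qed.

Lemma adjacent_cut_card b a :
  kappa e <= #|C ((b + a) %% w)| + #|T| + #|C ((b + (a + 1)) %% w)|.
Proof.
have := kappa_le (closed_part_cut (sector_closed_part (b + a))).
rewrite addnA card_cut3 // eq_sym.
by apply: addn_mod_neq; have := wheel_w4; lia.
Qed.

(* All spokes have the same size (kappa - |T|)/2: compare the wheel cuts
   C_i u T u C_{i+2} (size kappa) with the adjacent cuts C_i u T u C_{i+1}. *)
Lemma spoke_card i : 2 * #|C (i %% w)| = kappa e - #|T|.
Proof.
rewrite -[i]addn0.
have h0 : #|C ((i + 0) %% w)| + #|T| + #|C ((i + 2) %% w)| = kappa e := wheel_cut_card i 0.
have h1 : #|C ((i + 1) %% w)| + #|T| + #|C ((i + 3) %% w)| = kappa e := wheel_cut_card i 1.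
have h2 : #|C ((i + 2) %% w)| + #|T| + #|C ((i + 4) %% w)| = kappa e := wheel_cut_card i 2.
have g0 : kappa e <= #|C ((i + 0) %% w)| + #|T| + #|C ((i + 1) %% w)| := adjacent_cut_card i 0.
have g1 : kappa e <= #|C ((i + 1) %% w)| + #|T| + #|C ((i + 2) %% w)| := adjacent_cut_card i 1.
have g2 : kappa e <= #|C ((i + 2) %% w)| + #|T| + #|C ((i + 3) %% w)| := adjacent_cut_card i 2.
have g3 : kappa e <= #|C ((i + 3) %% w)| + #|T| + #|C ((i + 4) %% w)| := adjacent_cut_card i 3.
lia.
Qed.

Lemma cut_card a b : a %% w != b %% w ->
  #|C (a %% w) :|: T :|: C (b %% w)| = kappa e.
Proof.
move=> ne_ab; rewrite card_cut3 //.
have ha := spoke_card a; have hb := spoke_card b; have h0 := wheel_cut_card a 0.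
rewrite addn0 in h0; lia.
Qed.

Lemma mem_Dij i j x : i < w ->
  x \in Dij w C S i j <->
  (exists2 k, k < offset w i j & x \in S ((i + k) %% w)) \/
  (exists2 k, 0 < k < offset w i j & x \in C ((i + k) %% w)).
Proof.
move=> lt_iw; rewrite /Dij (modn_small lt_iw) inE; split.
  case/orP=> [/bigcupP[k _ xk]|/mem_bigcup_seq[k]]; first by left; exists k.
  by rewrite mem_index_iota => rk xk; right; exists k.
case=> [[k lt_kd xk]|[k rk xk]]; apply/orP; [left|right].
  by apply/bigcupP; exists (Ordinal lt_kd).
by apply/mem_bigcup_seq; exists k; rewrite ?mem_index_iota.
Qed.
Arguments mem_Dij {i j x}.

(* Every vertex of the spokes bounding S_k has a neighbour in each component of
   G[S_k]: such a component is separated by the minimum cut C_k u T u C_{k+1}. *)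
Lemma spoke_meets_component k s u : s \in S (k %% w) ->
  (u \in C (k %% w)) || (u \in C ((k + 1) %% w)) ->
  exists2 t, path_in e (S (k %% w)) s t & e u t.
Proof.
move=> sS uC; have comp := component_closed_part (sector_closed_part k) sS.
have ne_k : k %% w != (k + 1) %% w by rewrite eq_sym addn_mod_neq //; have := wheel_w4; lia.
have uU : u \in C (k %% w) :|: T :|: C ((k + 1) %% w).
  by rewrite !inE; case/orP: uC => ->; rewrite ?orbT.
have [t] := mincut_neighbour e_sym comp (cut_card ne_k) uU.
by rewrite inE; exists t.
Qed.

Lemma spoke_reaches_sector (A : {set V}) k s u : S (k %% w) \subset A -> u \in A ->
  (u \in C (k %% w)) || (u \in C ((k + 1) %% w)) -> s \in S (k %% w) ->
  path_in e A u s.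
Proof.
move=> sub_A Au uC sS; have [t st ut] := spoke_meets_component sS uC.
have At : t \in A by case/and3P: st => _ /(subsetP sub_A).
apply: path_in_trans (path_in_edge Au At ut) _.
by rewrite path_in_sym //; apply: path_in_sub st.
Qed.

Section Pair.
Variables i j : nat.
Hypotheses (lt_iw : i < w) (lt_jw : j < w) (ne_ij : i != j).
Local Notation d := (offset w i j).
Local Notation U := (Cij w T C i j).
Local Notation D := (Dij w C S i j).

Lemma offset_bounds : 0 < d < w.
Proof. by rewrite offset_gt0 ?offset_lt. Qed.

Lemma Cij_offset : U = C ((i + 0) %% w) :|: T :|: C ((i + d) %% w).
Proof. by rewrite /Cij addn0 offsetK // (modn_small lt_jw). Qed.

Lemma Dij_disjoint : D :&: U = set0.
Proof.
have w4 := wheel_w4; have := offset_bounds => lt_d.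
apply/setP=> x; rewrite in_setI in_set0; apply/negP=> /andP[/(mem_Dij lt_iw) xD].
rewrite Cij_offset !inE => /orP[/orP[x'|x']|x']; by case: xD => -[k lt_k xk]; block_contra.
Qed.

Lemma Dij_nonempty : D != set0.
Proof.
case/set0Pn: (sector_nonempty (i + 0)) => x xS; apply/set0Pn; exists x.
by apply/(mem_Dij lt_iw); left; exists 0; first by case/andP: offset_bounds.
Qed.

Lemma Dij_outside : ~: (U :|: D) != set0.
Proof.
have w4 := wheel_w4; have := offset_bounds => lt_d.
case/set0Pn: (sector_nonempty (i + d)) => x xS; apply/set0Pn; exists x.
rewrite in_setC in_setU negb_or; apply/andP; split.
  by rewrite Cij_offset !inE; apply/negP=> /orP[/orP[x'|x']|x']; block_contra.
by apply/negP=> /(mem_Dij lt_iw) [] [k lt_k xk]; block_contra.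
Qed.

(* No edge leaves D(i,j) except into the cut C(i,j): every neighbour of a
   sector or spoke of D(i,j) lies in an adjacent block, and the blocks adjacent
   to D(i,j) are those of D(i,j), the spokes C_i, C_j and the centre T. *)
Lemma Dij_closed z z' : z \in D -> e z z' -> z' \notin U -> z' \in D.
Proof.
move=> zD ezz' z'U.
have /and3P[nC0 nT nCd] :
    [&& z' \notin C ((i + 0) %% w), z' \notin T & z' \notin C ((i + d) %% w)].
  by move: z'U; rewrite Cij_offset !inE !negb_or andbA.
have sectorD a : a < d -> z' \in S ((i + a) %% w) -> z' \in D.
  by move=> lt_ad z'S; apply/(mem_Dij lt_iw); left; exists a.
have spokeD a : a <= d -> z' \in C ((i + a) %% w) -> z' \in D.
  move=> le_ad z'C; apply/(mem_Dij lt_iw); right; exists a => //.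
  have a_gt0 : 0 < a by case: a {le_ad} z'C => // z'C; rewrite z'C in nC0.
  have ne_ad : a != d by apply: contraNneq nCd => ad; rewrite -ad.
  by rewrite a_gt0 ltn_neqAle ne_ad.
have [lt_dw w4] := (offset_lt w_gt0 i j, wheel_w4).
case/(mem_Dij lt_iw): zD => -[k lt_k zk].
  case/or4P: (sector_nbr zk ezz') => [z'S|z'C|z'C|z'T].
  - exact: sectorD lt_k z'S.
  - by apply: spokeD z'C; lia.
  - by apply: (spokeD (k + 1)); rewrite ?addnA //; lia.
  - by rewrite z'T in nT.
case: k lt_k zk => [|k] lt_k; first by case/andP: lt_k.
rewrite addnS -addn1 => zk.
case/orP: (spoke_nbr zk ezz') => [z'C|/orP[z'T|/orP[z'C|/orP[z'S|/orP[z'C|z'S]]]]].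
- by apply: spokeD z'C; lia.
- by rewrite z'T in nT.
- by apply: (spokeD (k + 2)); rewrite ?addnA //; lia.
- by apply: sectorD z'S; lia.
- by apply: (spokeD (k + 1)); rewrite ?addnA //; lia.
- by apply: (sectorD (k + 1)); rewrite ?addnA //; lia.
Qed.

Lemma Dij_closed_part : closed_part e U D.
Proof. split; [exact: Dij_nonempty|exact: Dij_disjoint|exact: Dij_outside|exact: Dij_closed]. Qed.

Lemma Dij_not_cut x : x \in D -> x \in ~: U.
Proof. by move=> xD; rewrite in_setC; exact (closed_part_notin Dij_closed_part xD). Qed.

(* When d > 1, D(i,j) is connected in G - C(i,j): each of its sectors and spokes
   reaches a fixed vertex c of C_{i+1}, walking along sectors via the spokes. *)
Lemma Dij_connected : 1 < d -> forall y z, y \in D -> z \in D -> path_in e (~: U) y z.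
Proof.
move=> gt1_d; have lt_dw := offset_lt w_gt0 i j.
have sectorU m : m < d -> S ((i + m) %% w) \subset ~: U.
  by move=> lt_md; apply/subsetP=> y yS; apply: Dij_not_cut; apply/(mem_Dij lt_iw); left; exists m.
have spokeU m u : 0 < m < d -> u \in C ((i + m) %% w) -> u \in ~: U.
  by move=> lt_md uC; apply: Dij_not_cut; apply/(mem_Dij lt_iw); right; exists m.
case/set0Pn: (spoke_nonempty (i + 1)) => c cC.
have sector_c m : m < d -> forall s, s \in S ((i + m) %% w) -> path_in e (~: U) s c.
  elim: m => [|m IH] lt_md s sS.
    rewrite path_in_sym //; apply: spoke_reaches_sector (sectorU _ lt_md) _ _ sS.
      by apply: (spokeU 1) cC; lia.
    by rewrite -addnA cC orbT.
  case/set0Pn: (spoke_nonempty (i + m.+1)) => u uC.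
  have Uu : u \in ~: U by apply: (spokeU m.+1) uC; lia.
  case/set0Pn: (sector_nonempty (i + m)) => s' s'S.
  have us' : path_in e (~: U) u s'.
    apply: spoke_reaches_sector (sectorU _ (ltnW lt_md)) Uu _ s'S.
    by rewrite -addnA addn1 uC orbT.
  apply: path_in_trans (path_in_trans us' (IH (ltnW lt_md) _ s'S)).
  by rewrite path_in_sym //; apply: spoke_reaches_sector (sectorU _ lt_md) Uu _ sS; rewrite uC.
have to_c y : y \in D -> path_in e (~: U) y c.
  case/(mem_Dij lt_iw)=> -[m lt_md ym]; first exact: sector_c ym.
  case/set0Pn: (sector_nonempty (i + m)) => s sS; case/andP: (lt_md) => _ lt_md'.
  apply: path_in_trans (sector_c _ lt_md' _ sS).
  by apply: spoke_reaches_sector (sectorU _ lt_md') (spokeU _ _ lt_md ym) _ sS; rewrite ym.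
by move=> y z yD zD; apply: path_in_trans (to_c _ yD) _; rewrite path_in_sym // to_c.
Qed.

(* Every vertex outside C(i,j) lies in D(i,j) or in D(j,i): locate its block
   at offset k from i; offsets below d belong to D(i,j), the others, shifted
   by d, to D(j,i). *)
Lemma outside_cut x : x \notin U -> x \in D \/ x \in Dij w C S j i.
Proof.
move=> xU; have /and3P[nCi nT nCj] : [&& x \notin C i, x \notin T & x \notin C j].
  by move: xU; rewrite /Cij !modn_small // !inE !negb_or andbA.
have [lt_dw w4] := (offset_lt w_gt0 i j, wheel_w4).
have d_gt0 : 0 < d by case/andP: offset_bounds.
have dji : offset w j i = w - d := offset_sym w_gt0 lt_iw lt_jw ne_ij.
case: (vertex_block x) => [xT|[m lt_mw xm]]; first by rewrite xT in nT.
have := offsetK w_gt0 lt_iw lt_mw; set k := offset w i m => km.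
have lt_kw : k < w := offset_lt w_gt0 i m.
have shift : d <= k -> (j + (k - d)) %% w = m by move/(offset_shift w_gt0 lt_iw lt_jw); rewrite km.
case/orP: xm => xm.
  have k_gt0 : 0 < k.
    by rewrite lt0n; apply: contraNneq nCi => k0; move: km; rewrite k0 addn0 modn_small // => ->.
  have ne_kd : k != d.
    by apply: contraNneq nCj => kd; rewrite -(offsetK w_gt0 lt_iw lt_jw) -kd km.
  case: (ltnP k d) => [lt_kd|le_dk].
    by left; apply/(mem_Dij lt_iw); right; exists k; rewrite ?km ?k_gt0.
  right; apply/(mem_Dij lt_jw); right; exists (k - d); last by rewrite shift.
  by rewrite dji; lia.
case: (ltnP k d) => [lt_kd|le_dk].
  by left; apply/(mem_Dij lt_iw); left; exists k; rewrite ?km.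
right; apply/(mem_Dij lt_jw); left; exists (k - d); last by rewrite shift.
by rewrite dji; lia.
Qed.
End Pair.

Lemma Cij_kcut i j : i < w -> j < w -> i != j ->
  is_kcut e (Cij w T C i j) /\ disconnects e (Cij w T C i j) (Dij w C S i j).
Proof.
move=> lt_iw lt_jw ne_ij; have DU := Dij_closed_part lt_iw lt_jw ne_ij.
split; last exact: closed_part_disconnects DU.
split; first exact: closed_part_cut DU.
by rewrite /Cij cut_card // !modn_small.
Qed.

Lemma Cij_sides i j : i < w -> j < w -> i != j ->
  1 < offset w i j -> 1 < offset w j i -> forall P,
  is_side e (Cij w T C i j) P <-> (P = Dij w C S i j \/ P = Dij w C S j i).
Proof.
move=> lt_iw lt_jw ne_ij conn_ij conn_ji P; have ne_ji : j != i by rewrite eq_sym.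
have DU := Dij_closed_part lt_iw lt_jw ne_ij.
have DU' := Dij_closed_part lt_jw lt_iw ne_ji; rewrite Cij_sym in DU'.
have connD := Dij_connected lt_iw lt_jw ne_ij conn_ij.
have connD' := Dij_connected lt_jw lt_iw ne_ji conn_ji; rewrite Cij_sym in connD'.
split=> [[x xU ->]|[]->]; last 2 first.
- exact: closed_part_side DU connD.
- exact: closed_part_side DU' connD'.
case: (outside_cut lt_iw lt_jw ne_ij xU) => xD; [left|right].
- exact (closed_part_component DU connD xD).
- exact (closed_part_component DU' connD' xD).
Qed.
End Wheel.

Theorem lemma3 (V : finType) (e : rel V) (w : nat) (T : {set V})
    (C S : nat -> {set V}) :
  simple_graph e -> connected_graph e -> non_complete e ->
  is_wheel e w T C S ->
  (forall i j, i < w -> j < w -> i != j ->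
     is_kcut e (Cij w T C i j) /\
     disconnects e (Cij w T C i j) (Dij w C S i j)) /\
  (forall i j, i < w -> j < w -> i != j ->
     (j + w - i) %% w != 1 -> (j + w - i) %% w != w - 1 ->
     forall P : {set V},
       is_side e (Cij w T C i j) P <-> (P = Dij w C S i j \/ P = Dij w C S j i)) /\
  (forall i, i < w -> 2 * #|C i| = kappa e - #|T|).
Proof.
move=> [e_sym _] _ _ W; have w_gt0 : 0 < w by have := wheel_w4 W; lia.
split; [exact: Cij_kcut W | split].
- move=> i j lt_iw lt_jw ne_ij ne1 ne_w1.
  have [conn_ij conn_ji] := offset_gt1 w_gt0 lt_iw lt_jw ne_ij ne1 ne_w1.
  exact (Cij_sides e_sym W lt_iw lt_jw ne_ij conn_ij conn_ji).
- by move=> i lt_iw; rewrite -(modn_small lt_iw) (spoke_card W).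
Qed.
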